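(* Let $Q_0,\beta_1,\beta_2,\beta_3,c_1,c_2,c_3,\theta,\pi,\delta,\alpha,\mu$ be positive constants and $u_1\in[0,1]$ a constant. Consider the system \[ \begin{aligned} S' &= Q_0-\beta_m S-\mu S,\\ I_1' &= \beta_m S-(\theta+\mu+\delta)I_1,\\ I_2' &= \theta I_1-(\delta+\mu+\pi)I_2,\\ A' &= \delta I_1+\delta I_2+\pi I_2-(\alpha+\mu)A, \end{aligned} \qquad \beta_m=\frac{(1-u_1)(\beta_1c_1I_1+\beta_2c_2I_2+\beta_3c_3A)}{N},\quad N=S+I_1+I_2+A, \] and define $R_0=\zeta_1+\zeta_2+\zeta_3+\zeta_4$ with \[ \zeta_1=\frac{(1-u_1)\beta_1c_1}{\theta+\delta+\mu},\quad \zeta_2=\frac{(1-u_1)\beta_2c_2\theta}{(\theta+\delta+\mu)(\delta+\mu+\pi)},\quad \zeta_3=\frac{(1-u_1)\beta_3c_3\theta(\delta+\pi)}{(\theta+\delta+\mu)(\delta+\mu+\pi)(\alpha+\mu)},\quad \zeta_4=\frac{(1-u_1)\beta_3c_3\delta}{(\theta+\delta+\mu)(\alpha+\mu)}. \] (i) If $R_0\le 1$, the system admits the single (disease-free) equilibrium $E_0=(Q_0/\mu,0,0,0)$ in the nonnegative orthant. (ii) If $R_0>1$, the system admits two distinct equilibria: $E_0$ and a positive endemic equilibrium $E_1=(S^*,I_1^*,I_2^*,A^* )$ with all components positive.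
   Context: $S$ denotes susceptibles, $I_1$ unaware infectives, $I_2$ aware infectives, $A$ individuals with AIDS; $N$ is the total population; $R_0$ is the basic reproduction number. *)

From Stdlib Require Import Reals.
Open Scope R_scope.

Record params := mkParams {
  Q0 : R; beta1 : R; beta2 : R; beta3 : R; c1 : R; c2 : R; c3 : R;
  theta : R; pi_ : R; delta : R; alpha : R; mu : R; u1 : R }.

Definition params_ok (p : params) : Prop :=
  0 < Q0 p /\ 0 < beta1 p /\ 0 < beta2 p /\ 0 < beta3 p /\
  0 < c1 p /\ 0 < c2 p /\ 0 < c3 p /\ 0 < theta p /\ 0 < pi_ p /\
  0 < delta p /\ 0 < alpha p /\ 0 < mu p /\ 0 <= u1 p <= 1.

Definition state := (R * R * R * R)%type.

Definition Ntot (x : state) : R :=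
  let '(s, I1, I2, A) := x in s + I1 + I2 + A.

Definition beta_m (p : params) (x : state) : R :=
  let '(s, I1, I2, A) := x in
  (1 - u1 p) * (beta1 p * c1 p * I1 + beta2 p * c2 p * I2 + beta3 p * c3 p * A)
  / Ntot x.

Definition rhs (p : params) (x : state) : state :=
  let '(s, I1, I2, A) := x in
  let bm := beta_m p x in
  (Q0 p - bm * s - mu p * s,
   bm * s - (theta p + mu p + delta p) * I1,
   theta p * I1 - (delta p + mu p + pi_ p) * I2,
   delta p * I1 + delta p * I2 + pi_ p * I2 - (alpha p + mu p) * A).

Definition is_equilibrium (p : params) (x : state) : Prop :=
  rhs p x = (0, 0, 0, 0).

Definition nonneg_state (x : state) : Prop :=
  let '(s, I1, I2, A) := x in 0 <= s /\ 0 <= I1 /\ 0 <= I2 /\ 0 <= A.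

Definition positive_state (x : state) : Prop :=
  let '(s, I1, I2, A) := x in 0 < s /\ 0 < I1 /\ 0 < I2 /\ 0 < A.

Definition E0 (p : params) : state := (Q0 p / mu p, 0, 0, 0).

Definition zeta1 p := (1 - u1 p) * beta1 p * c1 p / (theta p + delta p + mu p).
Definition zeta2 p := (1 - u1 p) * beta2 p * c2 p * theta p
  / ((theta p + delta p + mu p) * (delta p + mu p + pi_ p)).
Definition zeta3 p := (1 - u1 p) * beta3 p * c3 p * theta p * (delta p + pi_ p)
  / ((theta p + delta p + mu p) * (delta p + mu p + pi_ p) * (alpha p + mu p)).
Definition zeta4 p := (1 - u1 p) * beta3 p * c3 p * delta p
  / ((theta p + delta p + mu p) * (alpha p + mu p)).
Definition R0_num p := zeta1 p + zeta2 p + zeta3 p + zeta4 p.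

(* At an equilibrium the last two equations are linear: they force I2 and A
   to be fixed multiples of I1, so the force of infection becomes
   beta_m = R0 (theta + mu + delta) I1 / N.  The I1-equation then reads
   I1 (R0 S - N) = 0.  Either I1 = 0, which gives E0, or N = R0 S; since
   N - S is a positive multiple of I1, this is possible only when R0 > 1, and
   together with the balance Q0 = (theta + mu + delta) I1 + mu S (sum of the
   first two equations) it determines S and I1 uniquely. *)

From Pilot Require Import Defs.
From Stdlib Require Import Reals Lra.
Open Scope R_scope.

Definition k1 p := theta p + mu p + delta p.
Definition k2 p := delta p + mu p + pi_ p.
Definition k3 p := alpha p + mu p.

Definition ratio_I2 p := theta p / k2 p.
Definition ratio_A p := (delta p + (delta p + pi_ p) * ratio_I2 p) / k3 p.
Definition ratio_infected p := 1 + ratio_I2 p + ratio_A p.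

(* The states on which the I2- and A-equations vanish; N = s + ratio_infected p * i there. *)
Definition ray_state p (s i : R) : state := (s, i, ratio_I2 p * i, ratio_A p * i).

Definition endemic_denom p := k1 p * (R0_num p - 1) + mu p * ratio_infected p.
Definition S_star p := Q0 p * ratio_infected p / endemic_denom p.
Definition I1_star p := Q0 p * (R0_num p - 1) / endemic_denom p.
Definition E1 p : state := ray_state p (S_star p) (I1_star p).

Lemma quadruple_eq0 (a b c d : R) :
  (a, b, c, d) = (0, 0, 0, 0) <-> a = 0 /\ b = 0 /\ c = 0 /\ d = 0.
Proof.
  split.
  - intro H; injection H; tauto.
  - intros (-> & -> & -> & ->); reflexivity.
Qed.

Section Equilibria.

Variable p : params.
Hypothesis Hp : params_ok p.

Ltac unpack_params :=
  destruct Hp as (HQ0 & Hb1 & Hb2 & Hb3 & Hc1 & Hc2 & Hc3 & Hth & Hpi & Hde & Hal & Hmu & Hu).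

Lemma rates_gt0 : 0 < k1 p /\ 0 < k2 p /\ 0 < k3 p.
Proof. unpack_params; unfold k1, k2, k3; lra. Qed.

Lemma ratios_gt0 : 0 < ratio_I2 p /\ 0 < ratio_A p /\ 1 < ratio_infected p.
Proof.
  pose proof rates_gt0 as (_ & Hk2 & Hk3); unpack_params.
  assert (HI2 : 0 < ratio_I2 p) by (apply Rdiv_lt_0_compat; lra).
  assert (HA : 0 < ratio_A p) by (apply Rdiv_lt_0_compat; nra).
  unfold ratio_infected; lra.
Qed.

Lemma R0_num_k1 :
  R0_num p * k1 p = (1 - u1 p) *
    (beta1 p * Defs.c1 p + beta2 p * Defs.c2 p * ratio_I2 p + beta3 p * Defs.c3 p * ratio_A p).
Proof.
  pose proof rates_gt0 as (Hk1 & Hk2 & Hk3).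
  unfold R0_num, zeta1, zeta2, zeta3, zeta4, ratio_A, ratio_I2.
  unfold k1, k2, k3 in *; field; lra.
Qed.

Lemma beta_m_ray_state s i :
  beta_m p (ray_state p s i) = R0_num p * k1 p * i / (s + ratio_infected p * i).
Proof.
  rewrite R0_num_k1; unfold beta_m, Ntot, ray_state, ratio_infected, Rdiv.
  f_equal; [ring | f_equal; ring].
Qed.

Lemma equilibrium_ray_state s i : 0 < s + ratio_infected p * i ->
  is_equilibrium p (ray_state p s i) <->
  Q0 p = k1 p * i + mu p * s /\ i * (R0_num p * s) = i * (s + ratio_infected p * i).
Proof.
  intro HN; pose proof rates_gt0 as (Hk1 & Hk2 & Hk3).
  unfold is_equilibrium, rhs.
  rewrite beta_m_ray_state; unfold ray_state; rewrite quadruple_eq0.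
  assert (HI2 : theta p * i - (delta p + mu p + pi_ p) * (ratio_I2 p * i) = 0)
    by (unfold ratio_I2, k2 in *; field; lra).
  assert (HA : delta p * i + delta p * (ratio_I2 p * i) + pi_ p * (ratio_I2 p * i)
               - (alpha p + mu p) * (ratio_A p * i) = 0)
    by (unfold ratio_A, k3 in *; field; lra).
  set (N := s + ratio_infected p * i) in *.
  assert (HbS : R0_num p * k1 p * i / N * s * N = k1 p * (i * (R0_num p * s)))
    by (field; lra).
  assert (Hinf : R0_num p * k1 p * i / N * s = k1 p * i <-> i * (R0_num p * s) = i * N).
  { split; intro H.
    - apply (Rmult_eq_reg_l (k1 p)); [|lra]. rewrite <- HbS, H; ring.
    - apply (Rmult_eq_reg_r N); [|lra]. rewrite HbS, H; ring. }
  fold (k1 p); rewrite <- Hinf; lra.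
Qed.

Lemma nonneg_equilibrium_ray_state x : nonneg_state x -> is_equilibrium p x ->
  exists s i, x = ray_state p s i /\ 0 < s /\ 0 <= i.
Proof.
  pose proof rates_gt0 as (_ & Hk2 & Hk3); unpack_params.
  destruct x as [[[s i1] i2] a]; intros (Hs & Hi1 & _ & _).
  unfold is_equilibrium, rhs; rewrite quadruple_eq0; intros (HS & _ & HI2 & HA).
  exists s, i1; split; [|split; [|exact Hi1]].
  - assert (Hi2e : i2 = ratio_I2 p * i1) by (unfold ratio_I2, k2 in *; field_simplify_eq; lra).
    assert (Hae : a = ratio_A p * i1).
    { subst i2; unfold ratio_A, k3 in *; field_simplify_eq; lra. }
    unfold ray_state; rewrite Hi2e, Hae; reflexivity.
  - destruct Hs as [|<-]; [lra|].
    rewrite !Rmult_0_r in HS; lra.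
Qed.

Lemma E0_ray_state : E0 p = ray_state p (Q0 p / mu p) 0.
Proof. unfold E0, ray_state; rewrite !Rmult_0_r; reflexivity. Qed.

Lemma E0_equilibrium : is_equilibrium p (E0 p).
Proof.
  unpack_params; rewrite E0_ray_state, equilibrium_ray_state.
  - split; [field|ring]; lra.
  - rewrite Rmult_0_r, Rplus_0_r; apply Rdiv_lt_0_compat; lra.
Qed.

Lemma endemic_denom_gt0 : 1 < R0_num p -> 0 < endemic_denom p.
Proof.
  pose proof rates_gt0 as (Hk1 & _); pose proof ratios_gt0 as (_ & _ & Hrc).
  unpack_params; unfold endemic_denom; nra.
Qed.

Lemma E1_positive : 1 < R0_num p -> positive_state (E1 p).
Proof.
  intro HR; pose proof (endemic_denom_gt0 HR) as HD.
  pose proof ratios_gt0 as (HI2 & HA & Hrc); unpack_params.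
  assert (HS : 0 < S_star p) by (apply Rdiv_lt_0_compat; nra).
  assert (HI : 0 < I1_star p) by (apply Rdiv_lt_0_compat; nra).
  unfold E1, ray_state; repeat split; nra.
Qed.

Lemma E1_equilibrium : 1 < R0_num p -> is_equilibrium p (E1 p).
Proof.
  intro HR; pose proof (endemic_denom_gt0 HR) as HD.
  pose proof (E1_positive HR) as (HS & HI & _).
  pose proof ratios_gt0 as (_ & _ & Hrc).
  unfold E1; rewrite equilibrium_ray_state; [|nra].
  unfold S_star, I1_star; split.
  - unfold endemic_denom in *; field; lra.
  - field; lra.
Qed.

Lemma nonneg_equilibrium_cases x : nonneg_state x -> is_equilibrium p x ->
  x = E0 p \/ (1 < R0_num p /\ x = E1 p).
Proof.
  intros Hx Heq.
  destruct (nonneg_equilibrium_ray_state _ Hx Heq) as (s & i & -> & Hs & Hi).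
  pose proof rates_gt0 as (Hk1 & _); pose proof ratios_gt0 as (_ & _ & Hrc); unpack_params.
  rewrite equilibrium_ray_state in Heq by nra; destruct Heq as (Hbal & Hinf).
  destruct Hi as [Hi | <-].
  - right.
    assert (HN : ratio_infected p * i = (R0_num p - 1) * s).
    { apply (Rmult_eq_reg_l i) in Hinf; lra. }
    assert (HR : 1 < R0_num p) by nra.
    assert (HiD : i * endemic_denom p = Q0 p * (R0_num p - 1)).
    { unfold endemic_denom; rewrite Hbal.
      transitivity (k1 p * i * (R0_num p - 1) + mu p * (ratio_infected p * i)); [ring|].
      rewrite HN; ring. }
    assert (HsD : s * endemic_denom p = Q0 p * ratio_infected p).
    { unfold endemic_denom; rewrite Hbal.
      transitivity (k1 p * ((R0_num p - 1) * s) + mu p * ratio_infected p * s); [ring|].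
      rewrite <- HN; ring. }
    pose proof (endemic_denom_gt0 HR) as HD.
    split; [exact HR|].
    unfold E1, S_star, I1_star; rewrite <- HiD, <- HsD.
    f_equal; field; lra.
  - left; rewrite E0_ray_state; f_equal.
    rewrite Hbal, Rmult_0_r, Rplus_0_l; field; lra.
Qed.

End Equilibria.

Theorem theorem3 (p : params) (Hp : params_ok p) :
  (R0_num p <= 1 ->
     forall x : state, nonneg_state x -> (is_equilibrium p x <-> x = E0 p)) /\
  (1 < R0_num p ->
     is_equilibrium p (E0 p) /\
     exists E1 : state,
       positive_state E1 /\ is_equilibrium p E1 /\ E1 <> E0 p /\
       (forall x : state, nonneg_state x -> is_equilibrium p x -> x = E0 p \/ x = E1)).
Proof.
  split.
  - intros HR x Hx; split.
    + intro Heq; destruct (nonneg_equilibrium_cases p Hp x Hx Heq) as [|[HR' _]]; [assumption|lra].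
    + intros ->; exact (E0_equilibrium p Hp).
  - intro HR; split; [exact (E0_equilibrium p Hp)|].
    exists (E1 p); split; [|split; [|split]].
    + exact (E1_positive p Hp HR).
    + exact (E1_equilibrium p Hp HR).
    + intro HE; destruct (E1_positive p Hp HR) as (_ & HI & _).
      unfold E1, E0, ray_state in HE; injection HE; lra.
    + intros x Hx Heq; destruct (nonneg_equilibrium_cases p Hp x Hx Heq) as [|[_ ->]]; auto.
Qed.
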